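(* Let $M_1=(Q_1,R_1,X_1,\delta_1)$ and $M_2=(Q_2,R_2,X_2,\delta_2)$ be rough finite state machines and let $\omega:Q_2\times X_2\to X_1$ be a map. Then the cascade product is covered by the wreath product: $M_1\,\omega\,M_2\preceq M_1\circ M_2$.
   Context: For a finite set $Q$ with an equivalence relation $R$ and $A\subseteq Q$, $\underline{A}$ is the union of the $R$-classes contained in $A$ and $\overline{A}$ is the union of the $R$-classes meeting $A$. A rough finite state machine (RFSM) is $M=(Q,R,X,\delta)$ with $Q$ a nonempty finite state set, $R$ an equivalence relation on $Q$, $X$ a nonempty finite input set, and $\delta$ assigning to each $(q,a)\in Q\times X$ a pair $\delta(q,a)=(\underline{\delta(q,a)},\overline{\delta(q,a)})=(\underline{A},\overline{A})$ for some $A\subseteq Q$. $R_1\times R_2$ is the equivalence relation on $Q_1\times Q_2$ with $((p_1,p_2),(q_1,q_2))\in R_1\times R_2$ iff $(p_1,q_1)\in R_1$ and $(p_2,q_2)\in R_2$. Cascade product: $M_1\,\omega\,M_2=(Q_1\times Q_2,R_1\times R_2,X_2,\delta_1\omega\delta_2)$ where $(\delta_1\omega\delta_2)((q_1,q_2),x_2)$ has lower part $\underline{\delta_1(q_1,\omega(q_2,x_2))}\times\underline{\delta_2(q_2,x_2)}$ and upper part $\overline{\delta_1(q_1,\omega(q_2,x_2))}\times\overline{\delta_2(q_2,x_2)}$. Wreath product: $M_1\circ M_2=(Q_1\times Q_2,R_1\times R_2,X_1^{Q_2}\times X_2,\delta_1\circ\delta_2)$, where $X_1^{Q_2}$ is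 the set of all maps $Q_2\to X_1$, and $(\delta_1\circ\delta_2)((q_1,q_2),(f,x))$ has lower part $\underline{\delta_1(q_1,f(q_2))}\times\underline{\delta_2(q_2,x)}$ and upper part $\overline{\delta_1(q_1,f(q_2))}\times\overline{\delta_2(q_2,x)}$. Covering: for RFSMs $N_1=(P_1,S_1,Y_1,\mu_1)$ and $N_2=(P_2,S_2,Y_2,\mu_2)$, a covering of $N_1$ by $N_2$ is a pair $(\eta,\xi)$ with $\eta:P_2\to P_1$ surjective and $\xi:Y_1\to Y_2$ a map (extended to words by $\xi(e)=e$, $\xi(y_1\cdots y_n)=\xi(y_1)\cdots\xi(y_n)$) such that (i) $(p,q)\in S_2\Rightarrow(\eta(p),\eta(q))\in S_1$ for all $p,q\in P_2$, and (ii) for all $p\in P_2$, $y\in Y_1$: $\underline{\mu_1(\eta(p),y)}\subseteq\eta(\underline{\mu_2(p,\xi(y))})$ and $\overline{\mu_1(\eta(p),y)}\subseteq\eta(\overline{\mu_2(p,\xi(y))})$. $N_1\preceq N_2$ means such a covering exists. *)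

From mathcomp Require Import all_boot.
Set Implicit Arguments.
Unset Strict Implicit.
Unset Printing Implicit Defensive.

Definition lower (Q : finType) (R : rel Q) (A : {set Q}) : {set Q} :=
  [set q | [forall p, R q p ==> (p \in A)]].

Definition upper (Q : finType) (R : rel Q) (A : {set Q}) : {set Q} :=
  [set q | [exists p, R q p && (p \in A)]].

Definition is_rfsm (Q X : finType) (R : rel Q)
    (delta : Q -> X -> {set Q} * {set Q}) : Prop :=
  0 < #|Q| /\ 0 < #|X| /\ equivalence_rel R /\
  forall q a, exists A : {set Q}, delta q a = (lower R A, upper R A).

Definition prod_rel (Q1 Q2 : finType) (R1 : rel Q1) (R2 : rel Q2)
  : rel (Q1 * Q2) := fun p q => R1 p.1 q.1 && R2 p.2 q.2.

Definition cascade_delta (Q1 Q2 X1 X2 : finType)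
    (delta1 : Q1 -> X1 -> {set Q1} * {set Q1})
    (delta2 : Q2 -> X2 -> {set Q2} * {set Q2})
    (omega : Q2 -> X2 -> X1) (q : Q1 * Q2) (x : X2)
  : {set Q1 * Q2} * {set Q1 * Q2} :=
  (setX (delta1 q.1 (omega q.2 x)).1 (delta2 q.2 x).1,
   setX (delta1 q.1 (omega q.2 x)).2 (delta2 q.2 x).2).

Definition wreath_delta (Q1 Q2 X1 X2 : finType)
    (delta1 : Q1 -> X1 -> {set Q1} * {set Q1})
    (delta2 : Q2 -> X2 -> {set Q2} * {set Q2})
    (q : Q1 * Q2) (fx : {ffun Q2 -> X1} * X2)
  : {set Q1 * Q2} * {set Q1 * Q2} :=
  (setX (delta1 q.1 (fx.1 q.2)).1 (delta2 q.2 fx.2).1,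
   setX (delta1 q.1 (fx.1 q.2)).2 (delta2 q.2 fx.2).2).

Definition covers (P1 Y1 P2 Y2 : finType)
    (S1 : rel P1) (mu1 : P1 -> Y1 -> {set P1} * {set P1})
    (S2 : rel P2) (mu2 : P2 -> Y2 -> {set P2} * {set P2}) : Prop :=
  exists (eta : P2 -> P1) (xi : Y1 -> Y2),
    (forall p1 : P1, exists p2 : P2, eta p2 = p1) /\
    (forall p q : P2, S2 p q -> S1 (eta p) (eta q)) /\
    (forall (p : P2) (y : Y1),
        (mu1 (eta p) y).1 \subset eta @: (mu2 p (xi y)).1 /\
        (mu1 (eta p) y).2 \subset eta @: (mu2 p (xi y)).2).

From mathcomp Require Import all_boot.

(* The wreath product simulates the cascade product by feeding it, on input
   x, the map q |-> omega q x; its transitions then coincide with those of the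
   cascade product, so the identity on states is a covering. *)

Definition cascade_input {Q2 X1 X2 : finType} (omega : Q2 -> X2 -> X1) (x : X2)
  : {ffun Q2 -> X1} * X2 := ([ffun q => omega q x], x).

Lemma wreath_delta_cascade_input (Q1 X1 Q2 X2 : finType)
    (delta1 : Q1 -> X1 -> {set Q1} * {set Q1})
    (delta2 : Q2 -> X2 -> {set Q2} * {set Q2})
    (omega : Q2 -> X2 -> X1) (q : Q1 * Q2) (x : X2) :
  wreath_delta delta1 delta2 q (cascade_input omega x)
  = cascade_delta delta1 delta2 omega q x.
Proof. by rewrite /wreath_delta /cascade_delta /= ffunE. Qed.

Lemma covers_id (P Y1 Y2 : finType) (S : rel P)
    (mu1 : P -> Y1 -> {set P} * {set P}) (mu2 : P -> Y2 -> {set P} * {set P})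
    (xi : Y1 -> Y2) :
  (forall p y, mu2 p (xi y) = mu1 p y) -> covers S mu1 S mu2.
Proof.
move=> mu2_xi; exists id, xi; split; first by move=> p; exists p.
by split=> // p y; rewrite mu2_xi !imset_id.
Qed.

Theorem proposition3p3 (Q1 X1 Q2 X2 : finType)
  (R1 : rel Q1) (delta1 : Q1 -> X1 -> {set Q1} * {set Q1})
  (R2 : rel Q2) (delta2 : Q2 -> X2 -> {set Q2} * {set Q2})
  (omega : Q2 -> X2 -> X1) :
  is_rfsm R1 delta1 -> is_rfsm R2 delta2 ->
  covers (prod_rel R1 R2) (cascade_delta delta1 delta2 omega)
         (prod_rel R1 R2) (wreath_delta delta1 delta2).
Proof.
move=> _ _; apply: covers_id => q x.
exact: wreath_delta_cascade_input.
Qed.
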